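(* Each of the following systems has an isochronous center at the origin $O$ with zero Urabe function (in systems with $\pm,\mp$, upper signs throughout or lower signs throughout): (i) for every $a\in\mathbb R$: $\dot x=-y+xy-\frac{3a}{4}x^2+ax^3-\frac a4x^4$, $\dot y=x+3y^2+\frac{3a}{2}xy-x^2+\frac{9a}{4}x^2y+\left(\frac13+\frac98a^2\right)x^3-\frac{3a}{4}x^3y-\frac{3a^2}{8}x^4$; (ii) $\dot x=-y+xy\pm\frac{\sqrt2}{2}x^2\mp\frac{2\sqrt2}{3}x^3\pm\frac{\sqrt2}{6}x^4$, $\dot y=x+6y^2\mp\sqrt2xy-\frac52x^2\mp\frac{9\sqrt2}{2}x^2y+\frac{13}{3}x^3\pm\frac{3\sqrt2}{2}x^3y-\frac43x^4$; (iii) $\dot x=-y\mp2\sqrt2xy+x^2\pm2\sqrt2x^3$, $\dot y=x\mp6\sqrt2y^2-2xy\pm2\sqrt2x^2\pm8\sqrt2x^2y+\frac{14}{3}x^3\mp2\sqrt2x^4$.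
   Context: For a real planar polynomial system $\dot x=-y+A(x,y)$, $\dot y=x+B(x,y)$, with $A,B$ polynomials having no terms of degree $<2$, the origin $O$ is an isochronous center if there is a punctured neighborhood of $O$ in which every orbit is a closed orbit surrounding $O$ and all these orbits have the same period. Zero Urabe function: write the system as $\dot x=p_0(x)+p_1(x)y$, $\dot y=q_0(x)+q_1(x)y+q_2(x)y^2$ ($p_0(0)=q_0(0)=0$, $p_1(0)\ne0$), where it holds that $-\frac{p_1'p_0}{p_1}+q_1+p_0'-\frac{2q_2p_0}{p_1}\equiv0$. Put $f=-\frac{q_2+p_1'}{p_1}$, $g=-\frac{q_2p_0^2}{p_1}+q_1p_0-p_1q_0$ (the change $z=p_0+p_1y$ gives $\dot x=z$, $\dot z=-g(x)-f(x)z^2$), $F(x)=\int_0^xf$, and $\xi$ near $0$ by $\frac12\xi(x)^2=\int_0^xg(s)e^{2F(s)}ds$, $x\xi(x)>0$ for $x\ne0$. The Urabe function of an isochronous center is the odd analytic $h$ with $\frac{\xi(x)}{1+h(\xi(x))}=g(x)e^{F(x)}$; ''zero Urabe function'' means $h\equiv0$, i.e. $\xi(x)=g(x)e^{F(x)}$ near $0$. *)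

From Stdlib Require Import Reals Lra List ClassicalEpsilon.
Import ListNotations.
Open Scope R_scope.

(** * Polynomials in one variable as coefficient lists [c0; c1; ...] (increasing degree) *)
Fixpoint peval (p : list R) (x : R) : R :=
  match p with
  | [] => 0
  | c :: l => c + x * peval l x
  end.

Fixpoint pderiv_aux (n : nat) (p : list R) : list R :=
  match p with
  | [] => []
  | c :: l => INR n * c :: pderiv_aux (S n) l
  end.

Definition pderiv (p : list R) : list R :=
  match p with
  | [] => []
  | _ :: l => pderiv_aux 1 l
  end.

(** * Oriented Riemann integral, total version (0 if not integrable) *)
Definition Rint (f : R -> R) (a b : R) : R :=
  match excluded_middle_informative (inhabited (Riemann_integrable f a b)) with
  | left h => RiemannInt (epsilon h (fun _ => True))
  | right _ => 0
  end.

Definition is_solution (P Q : R -> R -> R) (u v : R -> R) : Prop :=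
  forall t, derivable_pt_lim u t (P (u t) (v t)) /\
            derivable_pt_lim v t (Q (u t) (v t)).

(** the orbit {(u t, v t)} surrounds the origin: O lies in a bounded component
    of the complement of the orbit, i.e. every continuous path from O to a point
    far enough away meets the orbit *)
Definition surrounds_origin (u v : R -> R) : Prop :=
  (forall t, (u t, v t) <> (0, 0)) /\
  exists M : R, forall g1 g2 : R -> R,
    continuity g1 -> continuity g2 -> g1 0 = 0 -> g2 0 = 0 ->
    g1 1 ^ 2 + g2 1 ^ 2 > M ^ 2 ->
    exists s t, 0 <= s <= 1 /\ g1 s = u t /\ g2 s = v t.

Definition closed_orbit_period (P Q : R -> R -> R) (x0 y0 T : R) : Prop :=
  exists u v : R -> R,
    is_solution P Q u v /\ u 0 = x0 /\ v 0 = y0 /\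
    0 < T /\ (forall t, u (t + T) = u t /\ v (t + T) = v t) /\
    (forall s, 0 < s < T -> (u s, v s) <> (x0, y0)) /\
    surrounds_origin u v.

Definition isochronous_center (P Q : R -> R -> R) : Prop :=
  exists r T : R, 0 < r /\
    forall x0 y0, 0 < x0 ^ 2 + y0 ^ 2 < r ^ 2 -> closed_orbit_period P Q x0 y0 T.

Definition urabe_f (p0 p1 q0 q1 q2 : list R) (x : R) : R :=
  - (peval q2 x + peval (pderiv p1) x) / peval p1 x.
Definition urabe_g (p0 p1 q0 q1 q2 : list R) (x : R) : R :=
  - peval q2 x * (peval p0 x) ^ 2 / peval p1 x + peval q1 x * peval p0 x
  - peval p1 x * peval q0 x.
Definition urabe_F (p0 p1 q0 q1 q2 : list R) (x : R) : R :=
  Rint (urabe_f p0 p1 q0 q1 q2) 0 x.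
Definition urabe_xi (p0 p1 q0 q1 q2 : list R) (x : R) : R :=
  let I := Rint (fun s => urabe_g p0 p1 q0 q1 q2 s
                          * exp (2 * urabe_F p0 p1 q0 q1 q2 s)) 0 x in
  if Rlt_dec 0 x then sqrt (2 * I) else - sqrt (2 * I).

Definition zero_urabe (P Q : R -> R -> R) : Prop :=
  exists p0 p1 q0 q1 q2 : list R,
    (forall x y, P x y = peval p0 x + peval p1 x * y) /\
    (forall x y, Q x y = peval q0 x + peval q1 x * y + peval q2 x * y ^ 2) /\
    peval p0 0 = 0 /\ peval q0 0 = 0 /\ peval p1 0 <> 0 /\
    (forall x, peval p1 x <> 0 ->
       - peval (pderiv p1) x * peval p0 x / peval p1 x + peval q1 x
       + peval (pderiv p0) x - 2 * peval q2 x * peval p0 x / peval p1 x = 0) /\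
    exists d, 0 < d /\ forall x, Rabs x < d ->
      urabe_xi p0 p1 q0 q1 q2 x
      = urabe_g p0 p1 q0 q1 q2 x * exp (urabe_F p0 p1 q0 q1 q2 x).

Definition isochronous_zero_urabe (P Q : R -> R -> R) : Prop :=
  isochronous_center P Q /\ zero_urabe P Q.

From Stdlib Require Import Reals Lra Lia List ClassicalEpsilon FunctionalExtensionality Ranalysis5.
Import ListNotations.
Open Scope R_scope.

(** The substitution [z = p0 + p1 y] turns the system into [x' = z, z' = - g - f z^2],
    the compatibility condition removing the term linear in [z].  When [g' + f g = 1],
    the functions [xi = g e^F] and [nu = z e^F] satisfy [xi' = e^F > 0] and, along
    solutions, [xi' = nu] and [nu' = (z' + f z^2) e^F = - xi].  So near O the map
    [(x, y) |-> (xi, nu)] is a change of coordinates turning the system into the rotation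
    [(xi, nu)' = (nu, - xi)]: every orbit is the preimage of a circle, closed, surrounding
    O and of period [2 pi].  Moreover [(xi^2 / 2)' = g e^(2F)], so the Urabe [xi] is
    [g e^F], i.e. the Urabe function vanishes.  For the three families, [g' + f g = 1] is
    a polynomial identity. *)

Lemma derivable_pt_lim_eq_val f x l l' :
  derivable_pt_lim f x l -> l = l' -> derivable_pt_lim f x l'.
Proof. intros H <-; exact H. Qed.

Lemma derivable_pt_lim_pow_fun f x l n : derivable_pt_lim f x l ->
  derivable_pt_lim (fun y => f y ^ n) x (INR n * f x ^ pred n * l).
Proof.
  intro H. apply (derivable_pt_lim_comp f (fun y => y ^ n)); [exact H|].
  apply derivable_pt_lim_pow.
Qed.

Lemma derivable_pt_lim_continuity_pt f x l :
  derivable_pt_lim f x l -> continuity_pt f x.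
Proof. intro H. apply derivable_continuous_pt. exists l. exact H. Qed.

Lemma continuity_pt_ball f x eps : continuity_pt f x -> 0 < eps ->
  exists del, 0 < del /\ forall y, Rabs (y - x) < del -> Rabs (f y - f x) < eps.
Proof.
  intros H He. destruct (H eps He) as [del [Hd Hy]]. exists del. split; [exact Hd|].
  intros y Hy'. destruct (Req_dec y x) as [->|Hne].
  - unfold Rminus; rewrite Rplus_opp_r, Rabs_R0; exact He.
  - apply Hy. split; [split; [exact I | auto] | exact Hy'].
Qed.

Lemma continuity_pt_Rabs_bounds h c : continuity_pt h c -> h c <> 0 ->
  exists d, 0 < d /\
    forall x, Rabs (x - c) <= d -> Rabs (h c) / 2 < Rabs (h x) < 2 * Rabs (h c).
Proof.
  intros Hh Hc. assert (Hp := Rabs_pos_lt _ Hc).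
  destruct (continuity_pt_ball h c (Rabs (h c) / 2) Hh) as [del [Hdel K]]; [lra|].
  exists (del / 2). split; [lra|]. intros x Hx.
  assert (Kx : Rabs (h x - h c) < Rabs (h c) / 2) by (apply K; lra).
  assert (T1 := Rabs_triang_inv (h c) (h x)). rewrite Rabs_minus_sym in T1.
  assert (T2 := Rabs_triang (h x - h c) (h c)).
  replace (h x - h c + h c) with (h x) in T2 by ring.
  split; lra.
Qed.

Lemma peval_pderiv_aux_shift l m k x :
  peval (pderiv_aux (m + k) l) x = INR m * peval l x + peval (pderiv_aux k l) x.
Proof.
  revert m k. induction l as [|c l IH]; intros m k; simpl; [ring|].
  replace (S (m + k)) with (m + S k)%nat by lia.
  rewrite IH, plus_INR. ring.
Qed.

Lemma peval_pderiv_cons c l x :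
  peval (pderiv (c :: l)) x = peval l x + x * peval (pderiv l) x.
Proof.
  destruct l as [|c' l]; simpl; [ring|].
  change 2%nat with (1 + 1)%nat. rewrite peval_pderiv_aux_shift. simpl. ring.
Qed.

Lemma derivable_pt_lim_peval p x : derivable_pt_lim (peval p) x (peval (pderiv p) x).
Proof.
  induction p as [|c l IH].
  - apply derivable_pt_lim_const.
  - rewrite peval_pderiv_cons. change (peval (c :: l)) with (fun y => c + y * peval l y).
    eapply derivable_pt_lim_eq_val.
    + apply derivable_pt_lim_plus; [apply derivable_pt_lim_const|].
      apply derivable_pt_lim_mult; [apply derivable_pt_lim_id | exact IH].
    + simpl; ring.
Qed.

Lemma continuity_pt_peval p x : continuity_pt (peval p) x.
Proof. exact (derivable_pt_lim_continuity_pt _ _ _ (derivable_pt_lim_peval p x)). Qed.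

Ltac derive := repeat first
  [ apply derivable_pt_lim_plus | apply derivable_pt_lim_minus | apply derivable_pt_lim_opp
  | apply derivable_pt_lim_div | apply derivable_pt_lim_mult | apply derivable_pt_lim_pow_fun
  | apply derivable_pt_lim_cos | apply derivable_pt_lim_sin | apply derivable_pt_lim_peval
  | apply derivable_pt_lim_id | apply derivable_pt_lim_const ].

Lemma Rint_RiemannInt h a b (pr : Riemann_integrable h a b) : Rint h a b = RiemannInt pr.
Proof.
  unfold Rint. destruct excluded_middle_informative as [i|n].
  - apply RiemannInt_P5.
  - exfalso; exact (n (inhabits pr)).
Qed.

Lemma Rint_same h a : Rint h a a = 0.
Proof.
  unfold Rint. destruct excluded_middle_informative; [apply RiemannInt_P9 | reflexivity].
Qed.

Lemma continuity_Riemann_integrable h lo hi a b : lo <= a <= hi -> lo <= b <= hi ->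
  (forall y, lo <= y <= hi -> continuity_pt h y) -> Riemann_integrable h a b.
Proof.
  intros Ha Hb Hc. destruct (Rle_dec a b).
  - apply continuity_implies_RiemannInt; [lra|]. intros; apply Hc; lra.
  - apply RiemannInt_P1, continuity_implies_RiemannInt; [lra|]. intros; apply Hc; lra.
Qed.

Section RintContinuous.
Variables (h : R -> R) (lo hi : R).
Hypothesis h_cont : forall y, lo <= y <= hi -> continuity_pt h y.

Lemma Rint_chasles a b c : lo <= a <= hi -> lo <= b <= hi -> lo <= c <= hi ->
  Rint h a b + Rint h b c = Rint h a c.
Proof.
  intros Ha Hb Hc.
  rewrite (Rint_RiemannInt h a b (continuity_Riemann_integrable h lo hi a b Ha Hb h_cont)).
  rewrite (Rint_RiemannInt h b c (continuity_Riemann_integrable h lo hi b c Hb Hc h_cont)).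
  rewrite (Rint_RiemannInt h a c (continuity_Riemann_integrable h lo hi a c Ha Hc h_cont)).
  apply RiemannInt_P26.
Qed.

Lemma derivable_pt_lim_Rint c x : lo < c < hi -> lo < x < hi ->
  derivable_pt_lim (fun y => Rint h c y) x (h x).
Proof.
  intros Hc Hx. assert (Hle : lo <= hi) by lra.
  pose (G := primitive Hle (FTC_P1 Hle h_cont)).
  apply derivable_pt_lim_locally_ext with (f := fun y => G y - G c) (a := lo) (b := hi);
    [exact Hx| |].
  - intros z Hz. unfold G, primitive.
    destruct (Rle_dec lo z); [|lra]. destruct (Rle_dec z hi); [|lra].
    destruct (Rle_dec lo c); [|lra]. destruct (Rle_dec c hi); [|lra].
    rewrite <- (Rint_RiemannInt h lo z), <- (Rint_RiemannInt h lo c).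
    rewrite <- (Rint_chasles lo c z); lra.
  - eapply derivable_pt_lim_eq_val.
    + apply derivable_pt_lim_minus; [apply RiemannInt_P28; lra | apply derivable_pt_lim_const].
    + ring.
Qed.

Lemma Rint_antiderivative H c x : lo < c < hi -> lo < x < hi ->
  (forall y, lo < y < hi -> derivable_pt_lim H y (h y)) ->
  Rint h c x = H x - H c.
Proof.
  intros Hc Hx HD.
  assert (D0 : forall y, lo < y < hi ->
            derivable_pt_lim (fun y => Rint h c y - H y) y 0).
  { intros y Hy. eapply derivable_pt_lim_eq_val.
    - apply derivable_pt_lim_minus; [apply derivable_pt_lim_Rint | apply HD]; auto.
    - ring. }
  assert (E : Rint h c x - H x = Rint h c c - H c).
  { destruct (Rtotal_order x c) as [Hxc|[->|Hcx]]; [| reflexivity |].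
    - destruct (MVT_cor2 (fun y => Rint h c y - H y) (fun _ => 0) x c Hxc) as [z [Hz _]];
        [intros; apply D0; lra | lra].
    - destruct (MVT_cor2 (fun y => Rint h c y - H y) (fun _ => 0) c x Hcx) as [z [Hz _]];
        [intros; apply D0; lra | lra]. }
  rewrite Rint_same in E. lra.
Qed.
End RintContinuous.

Lemma Rabs_le_bounds a b : Rabs a <= b -> - b <= a <= b.
Proof. unfold Rabs; destruct Rcase_abs; intros; lra. Qed.

Lemma Rabs_sum_sq_gt a b e y : 0 <= e -> 0 <= y -> (e + y) ^ 2 < a ^ 2 + b ^ 2 ->
  e < Rabs a \/ y < Rabs b.
Proof.
  intros He Hy H. rewrite <- (pow2_abs a), <- (pow2_abs b) in H.
  assert (Ha := Rabs_pos a). assert (Hb := Rabs_pos b).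
  destruct (Rlt_le_dec e (Rabs a)); [now left|]. destruct (Rlt_le_dec y (Rabs b)); [now right|].
  nra.
Qed.

Lemma unit_circle_angle p q : p ^ 2 + q ^ 2 = 1 -> exists t, cos t = p /\ sin t = q.
Proof.
  intro H. assert (Hp : -1 <= p <= 1) by nra.
  assert (Hs : sqrt (1 - p²) = Rabs q).
  { rewrite <- sqrt_Rsqr_abs. f_equal. unfold Rsqr; nra. }
  destruct (Rle_dec 0 q).
  - exists (acos p). rewrite cos_acos, sin_acos, Hs, Rabs_right; lra.
  - exists (- acos p). rewrite cos_neg, sin_neg, cos_acos, sin_acos, Hs, Rabs_left; lra.
Qed.

Lemma rotation_between A B a b : 0 < A ^ 2 + B ^ 2 -> A ^ 2 + B ^ 2 = a ^ 2 + b ^ 2 ->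
  exists t, A * cos t + B * sin t = a /\ - A * sin t + B * cos t = b.
Proof.
  intros Hpos Heq. set (r := sqrt (A ^ 2 + B ^ 2)).
  assert (Hr : 0 < r) by (apply sqrt_lt_R0; lra).
  assert (Hr2 : r * r = A ^ 2 + B ^ 2) by (apply sqrt_sqrt; lra).
  destruct (unit_circle_angle (A / r) (B / r)) as [al [Ha1 Ha2]].
  { replace ((A / r) ^ 2 + (B / r) ^ 2) with ((A ^ 2 + B ^ 2) / (r * r)) by (field; lra).
    rewrite <- Hr2. field. lra. }
  destruct (unit_circle_angle (a / r) (- b / r)) as [th [Ht1 Ht2]].
  { replace ((a / r) ^ 2 + (- b / r) ^ 2) with ((a ^ 2 + b ^ 2) / (r * r)) by (field; lra).
    rewrite <- Heq, <- Hr2. field. lra. }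
  assert (EA : A = r * cos al) by (rewrite Ha1; field; lra).
  assert (EB : B = r * sin al) by (rewrite Ha2; field; lra).
  assert (Ea : a = r * cos th) by (rewrite Ht1; field; lra).
  assert (Eb : b = - r * sin th) by (rewrite Ht2; field; lra).
  assert (S1 := sin2_cos2 al). unfold Rsqr in S1.
  exists (th + al). rewrite cos_plus, sin_plus, EA, EB, Ea, Eb. split.
  - transitivity (r * cos th * (sin al * sin al + cos al * cos al)); [ring|]. rewrite S1; ring.
  - transitivity (- r * sin th * (sin al * sin al + cos al * cos al)); [ring|]. rewrite S1; ring.
Qed.

Lemma rotation_no_fixed_vector A B s : 0 < A ^ 2 + B ^ 2 -> 0 < s < 2 * PI ->
  A * cos s + B * sin s = A -> - A * sin s + B * cos s = B -> False.
Proof.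
  intros HAB Hs E1 E2.
  assert (Hc : (A ^ 2 + B ^ 2) * cos s = A ^ 2 + B ^ 2).
  { transitivity (A * (A * cos s + B * sin s) + B * (- A * sin s + B * cos s)); [ring|].
    rewrite E1, E2; ring. }
  assert (Hsn : (A ^ 2 + B ^ 2) * sin s = 0).
  { transitivity (B * (A * cos s + B * sin s) - A * (- A * sin s + B * cos s)); [ring|].
    rewrite E1, E2; ring. }
  assert (S0 : sin s = 0) by (destruct (Rmult_integral _ _ Hsn); lra).
  assert (C1 : cos s = 1) by (apply Rmult_eq_reg_l with (A ^ 2 + B ^ 2); lra).
  destruct (sin_eq_0_0 s S0) as [k ->]. assert (HP := PI_RGT_0).
  assert (K1 : (0 < k)%Z) by (apply lt_IZR; nra).
  assert (K2 : (k < 2)%Z) by (apply lt_IZR; nra).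
  replace k with 1%Z in C1 by lia. rewrite Rmult_1_l, cos_PI in C1. lra.
Qed.

Lemma exp_le_compat a b : a <= b -> exp a <= exp b.
Proof. intros [H| ->]; [left; exact (exp_increasing a b H) | right; reflexivity]. Qed.

Definition clamp lo hi x := Rmax lo (Rmin hi x).

Lemma continuity_pt_clamp lo hi x : lo <= hi -> continuity_pt (clamp lo hi) x.
Proof.
  intros H eps He. exists eps. split; [exact He|]. intros y [_ Hy]. simpl in *.
  unfold Rdist in *. eapply Rle_lt_trans; [|exact Hy].
  unfold clamp, Rmax, Rmin. repeat destruct Rle_dec; apply Rabs_le; unfold Rabs;
    destruct Rcase_abs; lra.
Qed.

Lemma clamp_range lo hi x : lo <= hi -> lo <= clamp lo hi x <= hi.
Proof. intro H. unfold clamp, Rmax, Rmin. repeat destruct Rle_dec; lra. Qed.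

Lemma clamp_id lo hi x : lo <= x <= hi -> clamp lo hi x = x.
Proof. intro H. unfold clamp, Rmax, Rmin. repeat destruct Rle_dec; lra. Qed.

Lemma Rabs_clamp_sym b x : 0 < b -> b < Rabs x -> Rabs (clamp (- b) b x) = b.
Proof.
  intros Hb. unfold clamp, Rmax, Rmin, Rabs.
  repeat destruct Rcase_abs; repeat destruct Rle_dec; intros; lra.
Qed.

Section Linearization.
Variables p0 p1 q0 q1 q2 : list R.
Local Notation P0 := (peval p0).
Local Notation P1 := (peval p1).
Local Notation Q0 := (peval q0).
Local Notation Q1 := (peval q1).
Local Notation Q2 := (peval q2).
Local Notation D0 := (peval (pderiv p0)).
Local Notation D1 := (peval (pderiv p1)).
Local Notation f := (urabe_f p0 p1 q0 q1 q2).
Local Notation g := (urabe_g p0 p1 q0 q1 q2).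
Local Notation F := (urabe_F p0 p1 q0 q1 q2).

Definition urabe_dg x :=
  - (peval (pderiv q2) x * P0 x ^ 2 + 2 * Q2 x * P0 x * D0 x) / P1 x
  + Q2 x * P0 x ^ 2 * D1 x / P1 x ^ 2
  + peval (pderiv q1) x * P0 x + Q1 x * D0 x - D1 x * Q0 x - P1 x * peval (pderiv q0) x.

Lemma derivable_pt_lim_urabe_g x : P1 x <> 0 -> derivable_pt_lim g x (urabe_dg x).
Proof.
  intro Hx. unfold urabe_g, urabe_dg. eapply derivable_pt_lim_eq_val.
  - derive. exact Hx.
  - simpl. unfold Rsqr. field. exact Hx.
Qed.

Definition lin_xi x := g x * exp (F x).
Definition lin_nu x y := (P0 x + P1 x * y) * exp (F x).

Hypothesis p0_0 : P0 0 = 0.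
Hypothesis q0_0 : Q0 0 = 0.
Hypothesis p1_0 : P1 0 <> 0.
Hypothesis urabe_compat : forall x, P1 x <> 0 ->
  - D1 x * P0 x / P1 x + Q1 x + D0 x - 2 * Q2 x * P0 x / P1 x = 0.
Hypothesis urabe_dg_linear : forall x, P1 x <> 0 -> urabe_dg x + f x * g x = 1.

Lemma lin_xi_0 : lin_xi 0 = 0.
Proof. unfold lin_xi, urabe_g. rewrite p0_0, q0_0. unfold Rdiv. ring. Qed.

Lemma continuity_pt_urabe_f x : P1 x <> 0 -> continuity_pt f x.
Proof. intro Hx. eapply derivable_pt_lim_continuity_pt. unfold urabe_f. derive. exact Hx. Qed.

Lemma continuity_pt_urabe_g x : P1 x <> 0 -> continuity_pt g x.
Proof. intro Hx. exact (derivable_pt_lim_continuity_pt _ _ _ (derivable_pt_lim_urabe_g x Hx)). Qed.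

Section Neighbourhood.
Variable d : R.
Hypothesis d_pos : 0 < d.
Hypothesis p1_bounds : forall x, Rabs x <= d -> Rabs (P1 0) / 2 < Rabs (P1 x) < 2 * Rabs (P1 0).

Lemma p1_neq0 x : Rabs x <= d -> P1 x <> 0.
Proof. intros Hx E. specialize (p1_bounds x Hx). rewrite E, Rabs_R0 in p1_bounds. lra. Qed.

Lemma derivable_pt_lim_urabe_F x : Rabs x < d -> derivable_pt_lim F x (f x).
Proof.
  intro Hx. apply Rabs_def2 in Hx. apply (derivable_pt_lim_Rint f (- d) d); [|lra|lra].
  intros y Hy. apply continuity_pt_urabe_f, p1_neq0, Rabs_le; lra.
Qed.

Lemma urabe_F_0 : F 0 = 0.
Proof. apply Rint_same. Qed.

Lemma derivable_pt_lim_exp_F x : Rabs x < d ->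
  derivable_pt_lim (fun y => exp (F y)) x (exp (F x) * f x).
Proof.
  intro Hx. apply (derivable_pt_lim_comp F exp).
  - exact (derivable_pt_lim_urabe_F x Hx).
  - apply derivable_pt_lim_exp.
Qed.

Lemma continuity_pt_exp_F x : Rabs x < d -> continuity_pt (fun y => exp (F y)) x.
Proof. intro Hx. exact (derivable_pt_lim_continuity_pt _ _ _ (derivable_pt_lim_exp_F x Hx)). Qed.

Lemma derivable_pt_lim_lin_xi x : Rabs x < d -> derivable_pt_lim lin_xi x (exp (F x)).
Proof.
  intro Hx. assert (Hn : P1 x <> 0) by (apply p1_neq0; lra).
  eapply derivable_pt_lim_eq_val.
  - apply derivable_pt_lim_mult;
      [apply derivable_pt_lim_urabe_g, Hn | apply derivable_pt_lim_exp_F, Hx].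
  - transitivity (exp (F x) * (urabe_dg x + f x * g x)); [ring|].
    rewrite urabe_dg_linear; [ring | exact Hn].
Qed.

Lemma continuity_pt_lin_xi x : Rabs x < d -> continuity_pt lin_xi x.
Proof. intro Hx. exact (derivable_pt_lim_continuity_pt _ _ _ (derivable_pt_lim_lin_xi x Hx)). Qed.

Lemma lin_xi_increasing a b : - d < a -> a < b -> b < d -> lin_xi a < lin_xi b.
Proof.
  intros Ha Hab Hb.
  destruct (MVT_cor2 lin_xi (fun x => exp (F x)) a b Hab) as [c [Hc _]].
  - intros c Hc. apply derivable_pt_lim_lin_xi, Rabs_def1; lra.
  - assert (Hp := exp_pos (F c)). nra.
Qed.

Lemma Rint_g_exp_2F x : Rabs x < d ->
  Rint (fun s => g s * exp (2 * F s)) 0 x = lin_xi x ^ 2 / 2.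
Proof.
  intro Hx. set (r := (Rabs x + d) / 2). assert (Hr : Rabs x < r < d) by (unfold r; lra).
  assert (Hx' := Rabs_def2 x r (proj1 Hr)). assert (Ha := Rabs_pos x).
  assert (Hcont : forall y, - r <= y <= r -> continuity_pt (fun s => g s * exp (2 * F s)) y).
  { intros y Hy. assert (Hy' : Rabs y < d) by (apply Rabs_def1; lra).
    apply continuity_pt_mult; [apply continuity_pt_urabe_g, p1_neq0; lra|].
    apply (continuity_pt_comp (fun s => 2 * F s) exp).
    - apply continuity_pt_scal, (derivable_pt_lim_continuity_pt _ _ _ (derivable_pt_lim_urabe_F y Hy')).
    - apply derivable_continuous_pt, derivable_pt_exp. }
  rewrite (Rint_antiderivative _ (- r) r Hcont (fun y => lin_xi y ^ 2 / 2)); [| lra | lra |].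
  - rewrite lin_xi_0. field.
  - intros y Hy. eapply derivable_pt_lim_eq_val.
    + apply derivable_pt_lim_div; [|apply derivable_pt_lim_const|lra].
      apply derivable_pt_lim_pow_fun, derivable_pt_lim_lin_xi, Rabs_def1; lra.
    + unfold lin_xi. replace (2 * F y) with (F y + F y) by ring. rewrite exp_plus.
      simpl. unfold Rsqr. field.
Qed.

Lemma urabe_xi_lin_xi x : Rabs x < d -> urabe_xi p0 p1 q0 q1 q2 x = lin_xi x.
Proof.
  intro Hx. unfold urabe_xi. rewrite Rint_g_exp_2F by exact Hx.
  replace (2 * (lin_xi x ^ 2 / 2)) with (Rsqr (lin_xi x)) by (unfold Rsqr; field).
  rewrite sqrt_Rsqr_abs. apply Rabs_def2 in Hx.
  destruct (Rlt_dec 0 x) as [Hp|Hp].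
  - apply Rabs_right. left. rewrite <- lin_xi_0. apply lin_xi_increasing; lra.
  - destruct (Req_dec x 0) as [->|Hne]; [rewrite lin_xi_0, Rabs_R0; ring|].
    rewrite Rabs_left; [ring|]. rewrite <- lin_xi_0. apply lin_xi_increasing; lra.
Qed.

Lemma zero_urabe_normal_form : zero_urabe (fun x y => P0 x + P1 x * y)
  (fun x y => Q0 x + Q1 x * y + Q2 x * y ^ 2).
Proof.
  exists p0, p1, q0, q1, q2. do 6 (split; [first [reflexivity | assumption]|]).
  exists d. split; [exact d_pos|]. exact urabe_xi_lin_xi.
Qed.
Lemma exists_box_bounds : exists e, 0 < e < d /\
  forall x, Rabs x <= e -> Rabs (P0 x) <= 1 /\ Rabs (F x) <= 1.
Proof.
  destruct (continuity_pt_ball P0 0 1 (continuity_pt_peval p0 0) Rlt_0_1) as [da [Hda Ka]].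
  assert (CF : continuity_pt F 0).
  { apply (derivable_pt_lim_continuity_pt _ _ _ (derivable_pt_lim_urabe_F 0 ltac:(rewrite Rabs_R0; lra))). }
  destruct (continuity_pt_ball F 0 1 CF Rlt_0_1) as [db [Hdb Kb]].
  set (e := Rmin (d / 2) (Rmin (da / 2) (db / 2))).
  assert (E1 := Rmin_l (d / 2) (Rmin (da / 2) (db / 2))).
  assert (E2 := Rmin_r (d / 2) (Rmin (da / 2) (db / 2))).
  assert (E3 := Rmin_l (da / 2) (db / 2)). assert (E4 := Rmin_r (da / 2) (db / 2)).
  assert (He : 0 < e) by (apply Rmin_glb_lt; [|apply Rmin_glb_lt]; lra).
  exists e. split; [fold e in E1; lra|]. intros x Hx. fold e in E1, E2.
  specialize (Ka x ltac:(rewrite Rminus_0_r; lra)). specialize (Kb x ltac:(rewrite Rminus_0_r; lra)).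
  rewrite p0_0, Rminus_0_r in Ka. rewrite urabe_F_0, Rminus_0_r in Kb. lra.
Qed.

Section Orbits.
Variable e : R.
Hypothesis e_range : 0 < e < d.
Hypothesis box_bounds : forall x, Rabs x <= e -> Rabs (P0 x) <= 1 /\ Rabs (F x) <= 1.

(* Orbits are followed as level sets [lin_xi x ^ 2 + lin_nu x y ^ 2 = c] inside the box
   [|x| <= e, |y| <= Y]; below the level [m] these never reach the boundary of the box. *)
Let Y := 4 / Rabs (P1 0).
Let m := Rmin (Rmin (lin_xi e ^ 2) (lin_xi (- e) ^ 2)) (exp (-1) ^ 2).

Lemma Y_pos : 0 < Y.
Proof. apply Rdiv_lt_0_compat; [lra | apply Rabs_pos_lt, p1_0]. Qed.

Lemma lin_xi_e_pos : 0 < lin_xi e.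
Proof. rewrite <- lin_xi_0. apply lin_xi_increasing; lra. Qed.

Lemma lin_xi_me_neg : lin_xi (- e) < 0.
Proof. rewrite <- lin_xi_0. apply lin_xi_increasing; lra. Qed.

Lemma m_pos : 0 < m.
Proof.
  assert (H1 := lin_xi_e_pos). assert (H2 := lin_xi_me_neg). assert (H3 := exp_pos (-1)).
  apply Rmin_glb_lt; [apply Rmin_glb_lt|]; nra.
Qed.

Lemma m_le_lin_xi_edge x : Rabs x = e -> m <= lin_xi x ^ 2.
Proof.
  unfold Rabs. destruct Rcase_abs; intro H.
  - replace x with (- e) by lra. eapply Rle_trans; [apply Rmin_l | apply Rmin_r].
  - replace x with e by lra. eapply Rle_trans; [apply Rmin_l | apply Rmin_l].
Qed.

Lemma lin_nu_large x y : Rabs x <= e -> Y <= Rabs y -> m <= lin_nu x y ^ 2.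
Proof.
  intros Hx Hy. destruct (box_bounds x Hx) as [HP0 HF].
  assert (Hp := Rabs_pos_lt _ p1_0).
  assert (HP1 : Rabs (P1 0) / 2 < Rabs (P1 x)) by (apply p1_bounds; lra).
  assert (HP1y : 2 <= Rabs (P1 x * y)).
  { rewrite Rabs_mult. replace 2 with (Rabs (P1 0) / 2 * Y) by (unfold Y; field; lra).
    assert (HY := Y_pos). apply Rmult_le_compat; lra. }
  assert (Hz : 1 <= Rabs (P0 x + P1 x * y)).
  { assert (T := Rabs_triang_inv (P1 x * y) (- P0 x)).
    rewrite Rabs_Ropp in T. replace (P1 x * y - - P0 x) with (P0 x + P1 x * y) in T by ring.
    lra. }
  assert (HE : exp (-1) <= exp (F x)).
  { apply exp_le_compat. apply Rabs_le_bounds in HF. lra. }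
  assert (H1 := exp_pos (-1)).
  unfold lin_nu. rewrite Rpow_mult_distr, <- (pow2_abs (P0 x + P1 x * y)).
  eapply Rle_trans; [apply Rmin_r|].
  assert (exp (-1) ^ 2 <= exp (F x) ^ 2) by nra.
  assert (1 <= Rabs (P0 x + P1 x * y) ^ 2) by nra.
  nra.
Qed.

Lemma lin_xi_le a b : - e <= a -> a <= b -> b <= e -> lin_xi a <= lin_xi b.
Proof.
  intros Ha [Hab| ->] Hb; [|lra]. left. apply lin_xi_increasing; lra.
Qed.

Lemma lin_xi_inj a b : - e <= a <= e -> - e <= b <= e -> lin_xi a = lin_xi b -> a = b.
Proof.
  intros Ha Hb E. destruct (Rtotal_order a b) as [L|[L|L]]; [| exact L |].
  - assert (T := lin_xi_increasing a b). lra.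
  - assert (T := lin_xi_increasing b a). lra.
Qed.

Lemma continuity_pt_lin_xi_box x : - e <= x <= e -> continuity_pt lin_xi x.
Proof. intro H. apply continuity_pt_lin_xi, Rabs_def1; lra. Qed.

Definition lin_xi_inv c := epsilon (inhabits 0) (fun z => - e <= z <= e /\ lin_xi z = c).

Lemma lin_xi_inv_spec c : lin_xi (- e) <= c <= lin_xi e ->
  - e <= lin_xi_inv c <= e /\ lin_xi (lin_xi_inv c) = c.
Proof.
  intro H. unfold lin_xi_inv. apply epsilon_spec.
  destruct (f_interv_is_interv lin_xi (- e) e c) as [z Hz]; [lra | exact H | |].
  - exact continuity_pt_lin_xi_box.
  - exists z; exact Hz.
Qed.

Lemma lin_xi_inv_lin_xi z : - e <= z <= e -> lin_xi_inv (lin_xi z) = z.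
Proof.
  intro H. assert (Hc : lin_xi (- e) <= lin_xi z <= lin_xi e) by (split; apply lin_xi_le; lra).
  destruct (lin_xi_inv_spec _ Hc) as [H1 H2]. apply lin_xi_inj; auto.
Qed.

Lemma derivable_pt_lim_lin_xi_inv c : lin_xi (- e) < c < lin_xi e ->
  derivable_pt_lim lin_xi_inv c (1 / exp (F (lin_xi_inv c))).
Proof.
  intro Hc.
  assert (Xlo : lin_xi_inv (lin_xi (- e)) = - e) by (apply lin_xi_inv_lin_xi; lra).
  assert (Xhi : lin_xi_inv (lin_xi e) = e) by (apply lin_xi_inv_lin_xi; lra).
  assert (Prf : forall a, lin_xi_inv (lin_xi (- e)) <= a <= lin_xi_inv (lin_xi e) ->
                  derivable_pt lin_xi a).
  { intros a Ha. rewrite Xlo, Xhi in Ha. exists (exp (F a)).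
    apply derivable_pt_lim_lin_xi, Rabs_def1; lra. }
  assert (Prg : continuity_pt lin_xi_inv c).
  { apply (continuity_pt_recip_interv lin_xi lin_xi_inv (- e) e); try lra.
    - intros; apply lin_xi_increasing; lra.
    - intros x Hx1 Hx2. exact (proj2 (lin_xi_inv_spec x (conj Hx1 Hx2))).
    - intros x Hx1 Hx2. exact (proj1 (lin_xi_inv_spec x (conj Hx1 Hx2))).
    - exact continuity_pt_lin_xi_box. }
  destruct (lin_xi_inv_spec c) as [Hc1 Hc2]; [lra|].
  assert (Hincr : lin_xi_inv (lin_xi (- e)) <= lin_xi_inv c <= lin_xi_inv (lin_xi e))
    by (rewrite Xlo, Xhi; lra).
  assert (Hd : derive_pt lin_xi (lin_xi_inv c) (Prf (lin_xi_inv c) Hincr) = exp (F (lin_xi_inv c))).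
  { apply derive_pt_eq_0, derivable_pt_lim_lin_xi, Rabs_def1; lra. }
  rewrite <- Hd.
  apply (derivable_pt_lim_recip_interv lin_xi lin_xi_inv (lin_xi (- e)) (lin_xi e) c Prf Prg);
    [lra | lra | |].
  - intros x Hx. exact (proj2 (lin_xi_inv_spec x Hx)).
  - rewrite Hd. apply Rgt_not_eq, exp_pos.
Qed.

(* Clamping to the box makes the level function continuous on the whole plane, so the
   intermediate value theorem applies along any path. *)
Definition box_level x y :=
  lin_xi (clamp (- e) e x) ^ 2 + lin_nu (clamp (- e) e x) (clamp (- Y) Y y) ^ 2.

Lemma box_level_in_box x y : Rabs x <= e -> Rabs y <= Y ->
  box_level x y = lin_xi x ^ 2 + lin_nu x y ^ 2.
Proof.
  intros Hx Hy. unfold box_level.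
  rewrite !clamp_id by (apply Rabs_le_bounds; assumption). reflexivity.
Qed.

Lemma box_level_0 : box_level 0 0 = 0.
Proof.
  assert (HY := Y_pos). rewrite box_level_in_box by (rewrite Rabs_R0; lra).
  rewrite lin_xi_0. unfold lin_nu. rewrite p0_0. ring.
Qed.

Lemma box_level_outside x y : e < Rabs x \/ Y < Rabs y -> m <= box_level x y.
Proof.
  assert (HY := Y_pos). unfold box_level.
  assert (Hcx := clamp_range (- e) e x ltac:(lra)).
  intros [Hx|Hy].
  - assert (T := m_le_lin_xi_edge _ (Rabs_clamp_sym e x (proj1 e_range) Hx)).
    assert (0 <= lin_nu (clamp (- e) e x) (clamp (- Y) Y y) ^ 2) by apply pow2_ge_0. lra.
  - assert (T := lin_nu_large (clamp (- e) e x) (clamp (- Y) Y y) (Rabs_le _ _ Hcx)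
                   (Req_le _ _ (eq_sym (Rabs_clamp_sym Y y HY Hy)))).
    assert (0 <= lin_xi (clamp (- e) e x) ^ 2) by apply pow2_ge_0. lra.
Qed.

Lemma continuity_pt_box_level_path (g1 g2 : R -> R) s :
  continuity_pt g1 s -> continuity_pt g2 s ->
  continuity_pt (fun s => box_level (g1 s) (g2 s)) s.
Proof.
  intros C1 C2. assert (HY := Y_pos).
  assert (Cx : continuity_pt (fun s => clamp (- e) e (g1 s)) s)
    by (apply (continuity_pt_comp g1); [exact C1 | apply continuity_pt_clamp; lra]).
  set (cx := fun s => clamp (- e) e (g1 s)) in Cx.
  assert (Hcx : - e <= cx s <= e) by (apply clamp_range; lra).
  assert (Cy : continuity_pt (fun s => clamp (- Y) Y (g2 s)) s)
    by (apply (continuity_pt_comp g2); [exact C2 | apply continuity_pt_clamp; lra]).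
  assert (Cxi : continuity_pt (fun s => lin_xi (cx s)) s)
    by (apply (continuity_pt_comp cx lin_xi); [exact Cx | apply continuity_pt_lin_xi_box, Hcx]).
  assert (CE : continuity_pt (fun s => exp (F (cx s))) s)
    by (apply (continuity_pt_comp cx (fun y => exp (F y))); [exact Cx |];
        apply continuity_pt_exp_F, Rabs_def1; lra).
  assert (CP0 : continuity_pt (fun s => P0 (cx s)) s)
    by (apply (continuity_pt_comp cx P0); [exact Cx | apply continuity_pt_peval]).
  assert (CP1 : continuity_pt (fun s => P1 (cx s)) s)
    by (apply (continuity_pt_comp cx P1); [exact Cx | apply continuity_pt_peval]).
  unfold box_level, lin_nu. fold (cx s).
  change (continuity_pt (fun s => lin_xi (cx s) ^ 2 +
    ((P0 (cx s) + P1 (cx s) * clamp (- Y) Y (g2 s)) * exp (F (cx s))) ^ 2) s).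
  repeat first [ assumption | apply continuity_pt_plus | apply continuity_pt_mult
               | apply continuity_pt_const; intros ? ?; reflexivity ].
Qed.

Lemma lin_level_pos x y : Rabs x <= e -> 0 < x ^ 2 + y ^ 2 ->
  0 < lin_xi x ^ 2 + lin_nu x y ^ 2.
Proof.
  intros Hx Hxy. apply Rabs_le_bounds in Hx.
  destruct (Rle_lt_dec (lin_xi x ^ 2 + lin_nu x y ^ 2) 0) as [Hle|Hlt]; [exfalso|exact Hlt].
  assert (HA : lin_xi x = 0) by nra. assert (HB : lin_nu x y = 0) by nra.
  assert (X0 : x = 0) by (apply lin_xi_inj; [lra | lra | rewrite lin_xi_0; exact HA]).
  subst x. unfold lin_nu in HB. rewrite p0_0, Rplus_0_l in HB.
  destruct (Rmult_integral _ _ HB) as [H|H]; [|exact (Rgt_not_eq _ _ (exp_pos _) H)].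
  destruct (Rmult_integral _ _ H) as [H'|H']; [exact (p1_0 H')|]. subst; lra.
Qed.

Section Orbit.
Variables A B : R.
Hypothesis AB_level : 0 < A ^ 2 + B ^ 2 < m.

Definition orbit_xi t := A * cos t + B * sin t.
Definition orbit_nu t := - A * sin t + B * cos t.
Definition orbit_x t := lin_xi_inv (orbit_xi t).
Definition orbit_y t := (orbit_nu t / exp (F (orbit_x t)) - P0 (orbit_x t)) / P1 (orbit_x t).

Lemma orbit_level t : orbit_xi t ^ 2 + orbit_nu t ^ 2 = A ^ 2 + B ^ 2.
Proof.
  unfold orbit_xi, orbit_nu. assert (S := sin2_cos2 t). unfold Rsqr in S.
  transitivity ((A ^ 2 + B ^ 2) * (sin t * sin t + cos t * cos t)); [ring|]. rewrite S; ring.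
Qed.

Lemma orbit_xi_range t : lin_xi (- e) < orbit_xi t < lin_xi e.
Proof.
  assert (T := orbit_level t). assert (T1 := lin_xi_e_pos). assert (T2 := lin_xi_me_neg).
  assert (M1 : m <= lin_xi e ^ 2) by (eapply Rle_trans; [apply Rmin_l | apply Rmin_l]).
  assert (M2 : m <= lin_xi (- e) ^ 2) by (eapply Rle_trans; [apply Rmin_l | apply Rmin_r]).
  assert (0 <= orbit_nu t ^ 2) by apply pow2_ge_0.
  split; nra.
Qed.

Lemma orbit_x_spec t : - e <= orbit_x t <= e /\ lin_xi (orbit_x t) = orbit_xi t.
Proof. apply lin_xi_inv_spec. assert (T := orbit_xi_range t). lra. Qed.

Lemma orbit_x_small t : Rabs (orbit_x t) < d.
Proof. destruct (orbit_x_spec t) as [H _]. apply Rabs_def1; lra. Qed.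

Lemma p1_orbit_x_neq0 t : P1 (orbit_x t) <> 0.
Proof. apply p1_neq0, Rlt_le, orbit_x_small. Qed.

Lemma derivable_pt_lim_orbit_x t :
  derivable_pt_lim orbit_x t (orbit_nu t / exp (F (orbit_x t))).
Proof.
  eapply derivable_pt_lim_eq_val.
  - apply (derivable_pt_lim_comp orbit_xi lin_xi_inv); [unfold orbit_xi; derive|].
    apply derivable_pt_lim_lin_xi_inv, orbit_xi_range.
  - unfold orbit_nu, orbit_x. field. apply Rgt_not_eq, exp_pos.
Qed.

Lemma derivable_pt_lim_along_orbit h h' t :
  (forall x, Rabs x < d -> derivable_pt_lim h x (h' x)) ->
  derivable_pt_lim (fun t => h (orbit_x t)) t
    (h' (orbit_x t) * (orbit_nu t / exp (F (orbit_x t)))).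
Proof.
  intro H. apply (derivable_pt_lim_comp orbit_x h);
    [apply derivable_pt_lim_orbit_x | apply H, orbit_x_small].
Qed.

(* Differentiating [orbit_y] gives [Q0 + Q1 y + Q2 y^2] once [Q1] is eliminated with
   the compatibility condition and [- orbit_xi] is recognised as [- g e^F]. *)
Lemma derivable_pt_lim_orbit_y t : derivable_pt_lim orbit_y t
  (Q0 (orbit_x t) + Q1 (orbit_x t) * orbit_y t + Q2 (orbit_x t) * orbit_y t ^ 2).
Proof.
  assert (Hn := p1_orbit_x_neq0 t). assert (HE := exp_pos (F (orbit_x t))).
  destruct (orbit_x_spec t) as [_ Hxi].
  unfold orbit_y. eapply derivable_pt_lim_eq_val.
  - apply derivable_pt_lim_div; [apply derivable_pt_lim_minus; [apply derivable_pt_lim_div|] | |].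
    + unfold orbit_nu. derive.
    + apply (derivable_pt_lim_along_orbit (fun x => exp (F x)) (fun x => exp (F x) * f x)).
      exact derivable_pt_lim_exp_F.
    + apply Rgt_not_eq, HE.
    + apply derivable_pt_lim_along_orbit. intros; apply derivable_pt_lim_peval.
    + apply derivable_pt_lim_along_orbit. intros; apply derivable_pt_lim_peval.
    + exact Hn.
  - cbv beta. replace (- 0 * sin t + - A * cos t + (0 * cos t + B * - sin t)) with (- orbit_xi t)
      by (unfold orbit_xi; ring).
    rewrite <- Hxi. unfold lin_xi, urabe_g, urabe_f.
    assert (HQ1 := urabe_compat (orbit_x t) Hn).
    replace (Q1 (orbit_x t)) with
      (D1 (orbit_x t) * P0 (orbit_x t) / P1 (orbit_x t) - D0 (orbit_x t)
       + 2 * Q2 (orbit_x t) * P0 (orbit_x t) / P1 (orbit_x t)) by lra.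
    unfold Rsqr. field. split; lra.
Qed.

Lemma orbit_is_solution : is_solution (fun x y => P0 x + P1 x * y)
  (fun x y => Q0 x + Q1 x * y + Q2 x * y ^ 2) orbit_x orbit_y.
Proof.
  intro t. split; [|apply derivable_pt_lim_orbit_y].
  eapply derivable_pt_lim_eq_val; [apply derivable_pt_lim_orbit_x|].
  unfold orbit_y. field. split; [apply Rgt_not_eq, exp_pos | apply p1_orbit_x_neq0].
Qed.

Lemma orbit_periodic t : orbit_x (t + 2 * PI) = orbit_x t /\ orbit_y (t + 2 * PI) = orbit_y t.
Proof.
  assert (E1 : orbit_xi (t + 2 * PI) = orbit_xi t).
  { unfold orbit_xi. rewrite cos_plus, sin_plus, cos_2PI, sin_2PI. ring. }
  assert (E2 : orbit_nu (t + 2 * PI) = orbit_nu t).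
  { unfold orbit_nu. rewrite cos_plus, sin_plus, cos_2PI, sin_2PI. ring. }
  assert (E3 : orbit_x (t + 2 * PI) = orbit_x t) by (unfold orbit_x; rewrite E1; reflexivity).
  split; [exact E3|]. unfold orbit_y. rewrite E3, E2. reflexivity.
Qed.

Lemma orbit_coords t x y : orbit_x t = x -> orbit_y t = y ->
  orbit_xi t = lin_xi x /\ orbit_nu t = lin_nu x y.
Proof.
  intros Hx Hy. destruct (orbit_x_spec t) as [_ Hxi]. assert (Hn := p1_orbit_x_neq0 t).
  assert (HE := exp_pos (F (orbit_x t))). subst x y. split; [now rewrite Hxi|].
  unfold orbit_y, lin_nu. field. split; lra.
Qed.

Lemma orbit_through x y : Rabs x <= e ->
  lin_xi x ^ 2 + lin_nu x y ^ 2 = A ^ 2 + B ^ 2 -> exists t, orbit_x t = x /\ orbit_y t = y.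
Proof.
  intros Hx Hlevel. apply Rabs_le_bounds in Hx.
  destruct (rotation_between A B (lin_xi x) (lin_nu x y)) as [t [Et1 Et2]]; [lra | lra |].
  assert (Xt : orbit_x t = x).
  { unfold orbit_x, orbit_xi. rewrite Et1. apply lin_xi_inv_lin_xi, Hx. }
  exists t. split; [exact Xt|]. unfold orbit_y. rewrite Xt. unfold orbit_nu. rewrite Et2.
  assert (Hn : P1 x <> 0) by (apply p1_neq0, Rabs_le; lra). assert (HE := exp_pos (F x)).
  unfold lin_nu. field. split; lra.
Qed.

(* A path from O to far away crosses the level [A^2 + B^2] of [box_level] inside the box. *)
Lemma orbit_surrounds_origin : surrounds_origin orbit_x orbit_y.
Proof.
  assert (HY := Y_pos). assert (Hm := m_pos). split.
  - intros t E. injection E as Hx Hy.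
    destruct (orbit_coords t 0 0 Hx Hy) as [E1 E2]. assert (T := orbit_level t).
    rewrite E1, E2, lin_xi_0 in T. unfold lin_nu in T. rewrite p0_0 in T. nra.
  - exists (e + Y). intros g1 g2 Hg1 Hg2 H1 H2 Hfar.
    destruct (IVT_interv (fun s => box_level (g1 s) (g2 s) - (A ^ 2 + B ^ 2)) 0 1)
      as [z [Hz Hlevel]].
    + intros s _. apply continuity_pt_minus; [apply continuity_pt_box_level_path; auto|].
      apply continuity_pt_const. intros ? ?; reflexivity.
    + lra.
    + rewrite H1, H2, box_level_0. lra.
    + assert (T := box_level_outside _ _ (Rabs_sum_sq_gt _ _ e Y ltac:(lra) ltac:(lra) Hfar)).
      lra.
    + assert (Hin : Rabs (g1 z) <= e /\ Rabs (g2 z) <= Y).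
      { destruct (Rle_lt_dec (Rabs (g1 z)) e) as [Hx|Hx];
          [destruct (Rle_lt_dec (Rabs (g2 z)) Y) as [Hy|Hy]; [tauto|] |];
          assert (T := box_level_outside (g1 z) (g2 z) ltac:(tauto)); lra. }
      rewrite box_level_in_box in Hlevel by tauto.
      destruct (orbit_through (g1 z) (g2 z)) as [t [Ht1 Ht2]]; [tauto | lra |].
      exists z, t. split; [exact Hz|]. split; symmetry; assumption.
Qed.
End Orbit.

Lemma closed_orbit_through x0 y0 : Rabs x0 <= e -> 0 < x0 ^ 2 + y0 ^ 2 ->
  lin_xi x0 ^ 2 + lin_nu x0 y0 ^ 2 < m ->
  closed_orbit_period (fun x y => P0 x + P1 x * y)
    (fun x y => Q0 x + Q1 x * y + Q2 x * y ^ 2) x0 y0 (2 * PI).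
Proof.
  intros Hx0 Hpos Hm. set (A := lin_xi x0). set (B := lin_nu x0 y0).
  assert (HAB : 0 < A ^ 2 + B ^ 2 < m) by (split; [apply lin_level_pos|]; assumption).
  assert (Hn : P1 x0 <> 0) by (apply p1_neq0; lra). assert (HE := exp_pos (F x0)).
  assert (X0 : orbit_x A B 0 = x0).
  { unfold orbit_x, orbit_xi. rewrite cos_0, sin_0, Rmult_1_r, Rmult_0_r, Rplus_0_r.
    apply lin_xi_inv_lin_xi, Rabs_le_bounds, Hx0. }
  exists (orbit_x A B), (orbit_y A B). split; [exact (orbit_is_solution A B HAB)|].
  split; [exact X0|]. split.
  { unfold orbit_y, orbit_nu. rewrite X0, cos_0, sin_0. unfold B, lin_nu. field. split; lra. }
  split; [apply Rmult_lt_0_compat; [lra | apply PI_RGT_0]|].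
  split; [exact (orbit_periodic A B)|].
  split; [|exact (orbit_surrounds_origin A B HAB)].
  intros s Hs E. injection E as Ex Ey.
  destruct (orbit_coords A B HAB s x0 y0 Ex Ey) as [E1 E2].
  exact (rotation_no_fixed_vector A B s (proj1 HAB) Hs E1 E2).
Qed.

Lemma lin_nu_near_0 eps : 0 < eps -> exists r, 0 < r <= e /\
  forall x y, Rabs x < r -> Rabs y < r -> Rabs (lin_nu x y) < eps.
Proof.
  intro Heps. assert (He1 := exp_pos 1). assert (Hp := Rabs_pos_lt _ p1_0).
  destruct (continuity_pt_ball P0 0 (eps / (2 * exp 1)) (continuity_pt_peval p0 0))
    as [r0 [Hr0 K0]]; [apply Rdiv_lt_0_compat; lra|].
  set (ry := eps / (4 * Rabs (P1 0) * exp 1)).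
  assert (Hry : 0 < ry) by (apply Rdiv_lt_0_compat; [|apply Rmult_lt_0_compat]; lra).
  set (r := Rmin e (Rmin r0 ry)).
  assert (R1 := Rmin_l e (Rmin r0 ry)). assert (R2 := Rmin_r e (Rmin r0 ry)).
  assert (R3 := Rmin_l r0 ry). assert (R4 := Rmin_r r0 ry). fold r in R1, R2.
  exists r. split; [split; [apply Rmin_glb_lt; [|apply Rmin_glb_lt]; lra | exact R1]|].
  intros x y Hx Hy. assert (Hxe : Rabs x <= e) by lra.
  assert (XP0 : Rabs (P0 x) < eps / (2 * exp 1)).
  { specialize (K0 x ltac:(rewrite Rminus_0_r; lra)). rewrite p0_0, !Rminus_0_r in K0. exact K0. }
  assert (XP1y : Rabs (P1 x * y) <= 2 * Rabs (P1 0) * ry).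
  { rewrite Rabs_mult. apply Rmult_le_compat; try apply Rabs_pos; [|lra].
    apply Rlt_le, p1_bounds. lra. }
  assert (Xz : Rabs (P0 x + P1 x * y) < eps / (2 * exp 1) + 2 * Rabs (P1 0) * ry)
    by (eapply Rle_lt_trans; [apply Rabs_triang | lra]).
  assert (XE : exp (F x) <= exp 1).
  { apply exp_le_compat. destruct (box_bounds x Hxe) as [_ HF]. apply Rabs_le_bounds in HF. lra. }
  assert (XE0 := exp_pos (F x)).
  replace eps with ((eps / (2 * exp 1) + 2 * Rabs (P1 0) * ry) * exp 1)
    by (unfold ry; field; lra).
  unfold lin_nu. rewrite Rabs_mult, (Rabs_right (exp (F x))) by lra.
  assert (0 <= Rabs (P0 x + P1 x * y)) by apply Rabs_pos. nra.
Qed.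

Lemma level_small_near_origin : exists r, 0 < r /\ forall x y, x ^ 2 + y ^ 2 < r ^ 2 ->
  Rabs x <= e /\ lin_xi x ^ 2 + lin_nu x y ^ 2 < m.
Proof.
  assert (Hm := m_pos). set (eps := Rmin 1 (m / 4)).
  assert (E1 := Rmin_l 1 (m / 4)). assert (E2 := Rmin_r 1 (m / 4)).
  assert (Heps : 0 < eps) by (apply Rmin_glb_lt; lra). fold eps in E1, E2.
  destruct (continuity_pt_ball lin_xi 0 eps (continuity_pt_lin_xi 0 ltac:(rewrite Rabs_R0; lra))
    Heps) as [r1 [Hr1 K1]].
  destruct (lin_nu_near_0 eps Heps) as [r2 [Hr2 K2]].
  exists (Rmin r1 r2). assert (R1 := Rmin_l r1 r2). assert (R2 := Rmin_r r1 r2).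
  split; [apply Rmin_glb_lt; lra|]. intros x y H.
  destruct (triangle_rectangle_lt x y (Rmin r1 r2)) as [Ax Ay]; [unfold Rsqr; nra|].
  rewrite (Rabs_right (Rmin r1 r2)) in Ax, Ay by (apply Rle_ge, Rmin_glb; lra).
  split; [lra|].
  assert (Xxi : Rabs (lin_xi x) < eps).
  { specialize (K1 x ltac:(rewrite Rminus_0_r; lra)). rewrite lin_xi_0, !Rminus_0_r in K1. exact K1. }
  assert (Xnu : Rabs (lin_nu x y) < eps) by (apply K2; lra).
  rewrite <- (pow2_abs (lin_xi x)), <- (pow2_abs (lin_nu x y)).
  assert (0 <= Rabs (lin_xi x)) by apply Rabs_pos. assert (0 <= Rabs (lin_nu x y)) by apply Rabs_pos.
  nra.
Qed.

Lemma isochronous_center_box : isochronous_center (fun x y => P0 x + P1 x * y)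
  (fun x y => Q0 x + Q1 x * y + Q2 x * y ^ 2).
Proof.
  destruct level_small_near_origin as [r [Hr K]]. exists r, (2 * PI). split; [exact Hr|].
  intros x0 y0 [H1 H2]. destruct (K x0 y0 H2). apply closed_orbit_through; assumption.
Qed.
End Orbits.
End Neighbourhood.

Lemma isochronous_zero_urabe_normal_form : isochronous_zero_urabe
  (fun x y => P0 x + P1 x * y) (fun x y => Q0 x + Q1 x * y + Q2 x * y ^ 2).
Proof.
  destruct (continuity_pt_Rabs_bounds P1 0 (continuity_pt_peval p1 0) p1_0) as [d [Hd Hb]].
  assert (Hb' : forall x, Rabs x <= d -> Rabs (P1 0) / 2 < Rabs (P1 x) < 2 * Rabs (P1 0))
    by (intros x Hx; apply Hb; rewrite Rminus_0_r; exact Hx).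
  destruct (exists_box_bounds d Hd Hb') as [e [He Hbox]].
  split; [exact (isochronous_center_box d Hd Hb' e He Hbox) | exact (zero_urabe_normal_form d Hd Hb')].
Qed.
End Linearization.

Lemma isochronous_zero_urabe_of_linearizable (P Q : R -> R -> R) p0 p1 q0 q1 q2 :
  (forall x y, P x y = peval p0 x + peval p1 x * y) ->
  (forall x y, Q x y = peval q0 x + peval q1 x * y + peval q2 x * y ^ 2) ->
  peval p0 0 = 0 -> peval q0 0 = 0 -> peval p1 0 <> 0 ->
  (forall x, peval p1 x <> 0 ->
    - peval (pderiv p1) x * peval p0 x / peval p1 x + peval q1 x + peval (pderiv p0) x
    - 2 * peval q2 x * peval p0 x / peval p1 x = 0) ->
  (forall x, peval p1 x <> 0 ->
    urabe_dg p0 p1 q0 q1 q2 x + urabe_f p0 p1 q0 q1 q2 x * urabe_g p0 p1 q0 q1 q2 x = 1) ->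
  isochronous_zero_urabe P Q.
Proof.
  intros HP HQ. replace P with (fun x y => peval p0 x + peval p1 x * y)
    by (do 2 (apply functional_extensionality; intro); symmetry; apply HP).
  replace Q with (fun x y => peval q0 x + peval q1 x * y + peval q2 x * y ^ 2)
    by (do 2 (apply functional_extensionality; intro); symmetry; apply HQ).
  exact (isochronous_zero_urabe_normal_form p0 p1 q0 q1 q2).
Qed.

Lemma system_i_isochronous (a : R) :
  isochronous_zero_urabe
    (fun x y => - y + x * y - 3 * a / 4 * x ^ 2 + a * x ^ 3 - a / 4 * x ^ 4)
    (fun x y => x + 3 * y ^ 2 + 3 * a / 2 * x * y - x ^ 2 + 9 * a / 4 * x ^ 2 * y
                + (1 / 3 + 9 / 8 * a ^ 2) * x ^ 3 - 3 * a / 4 * x ^ 3 * y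
                - 3 * a ^ 2 / 8 * x ^ 4).
Proof.
  apply (isochronous_zero_urabe_of_linearizable _ _ [0; 0; -3*a/4; a; -a/4] [-1; 1]
           [0; 1; -1; 1/3 + 9/8*a^2; -3*a^2/8] [0; 3*a/2; 9*a/4; -3*a/4] [3]).
  1-2: intros; simpl; field.
  1-3: simpl; lra.
  all: intros x Hx; unfold urabe_dg, urabe_f, urabe_g; simpl in *; field;
    intro E; apply Hx; ring_simplify; lra.
Qed.

Lemma system_ii_isochronous (sg : R) : sg = 1 \/ sg = -1 ->
  isochronous_zero_urabe
    (fun x y => - y + x * y + sg * (sqrt 2 / 2) * x ^ 2
                - sg * (2 * sqrt 2 / 3) * x ^ 3 + sg * (sqrt 2 / 6) * x ^ 4)
    (fun x y => x + 6 * y ^ 2 - sg * sqrt 2 * x * y - 5 / 2 * x ^ 2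
                - sg * (9 * sqrt 2 / 2) * x ^ 2 * y + 13 / 3 * x ^ 3
                + sg * (3 * sqrt 2 / 2) * x ^ 3 * y - 4 / 3 * x ^ 4).
Proof.
  intro Hsg. assert (H2 : sqrt 2 ^ 2 = 2) by (apply pow2_sqrt; lra). set (s := sqrt 2) in *.
  apply (isochronous_zero_urabe_of_linearizable _ _
           [0; 0; sg*(s/2); -sg*(2*s/3); sg*(s/6)] [-1; 1] [0; 1; -5/2; 13/3; -4/3]
           [0; -sg*s; -sg*(9*s/2); sg*(3*s/2)] [6]).
  1-2: intros; simpl; field.
  1-3: simpl; lra.
  all: intros x Hx; unfold urabe_dg, urabe_f, urabe_g; simpl in *;
    destruct Hsg as [-> | ->]; field [H2]; intro E; apply Hx; ring_simplify; lra.
Qed.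

Lemma system_iii_isochronous (sg : R) : sg = 1 \/ sg = -1 ->
  isochronous_zero_urabe
    (fun x y => - y - sg * (2 * sqrt 2) * x * y + x ^ 2 + sg * (2 * sqrt 2) * x ^ 3)
    (fun x y => x - sg * (6 * sqrt 2) * y ^ 2 - 2 * x * y
                + sg * (2 * sqrt 2) * x ^ 2 + sg * (8 * sqrt 2) * x ^ 2 * y
                + 14 / 3 * x ^ 3 - sg * (2 * sqrt 2) * x ^ 4).
Proof.
  intro Hsg. assert (H2 : sqrt 2 ^ 2 = 2) by (apply pow2_sqrt; lra). set (s := sqrt 2) in *.
  apply (isochronous_zero_urabe_of_linearizable _ _ [0; 0; 1; sg*(2*s)] [-1; -sg*(2*s)]
           [0; 1; sg*(2*s); 14/3; -sg*(2*s)] [0; -2; sg*(8*s)] [-sg*(6*s)]).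
  1-2: intros; simpl; field.
  1-3: simpl; lra.
  all: intros x Hx; unfold urabe_dg, urabe_f, urabe_g; simpl in *;
    destruct Hsg as [-> | ->]; field [H2]; intro E; apply Hx; ring_simplify;
    ring_simplify in E; lra.
Qed.

(* sg = 1 : upper signs, sg = -1 : lower signs *)
Theorem theorem4p2 :
  (forall a : R,
    isochronous_zero_urabe
      (fun x y => - y + x * y - 3 * a / 4 * x ^ 2 + a * x ^ 3 - a / 4 * x ^ 4)
      (fun x y => x + 3 * y ^ 2 + 3 * a / 2 * x * y - x ^ 2 + 9 * a / 4 * x ^ 2 * y
                  + (1 / 3 + 9 / 8 * a ^ 2) * x ^ 3 - 3 * a / 4 * x ^ 3 * y
                  - 3 * a ^ 2 / 8 * x ^ 4)) /\
  (forall sg : R, sg = 1 \/ sg = -1 ->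
    isochronous_zero_urabe
      (fun x y => - y + x * y + sg * (sqrt 2 / 2) * x ^ 2
                  - sg * (2 * sqrt 2 / 3) * x ^ 3 + sg * (sqrt 2 / 6) * x ^ 4)
      (fun x y => x + 6 * y ^ 2 - sg * sqrt 2 * x * y - 5 / 2 * x ^ 2
                  - sg * (9 * sqrt 2 / 2) * x ^ 2 * y + 13 / 3 * x ^ 3
                  + sg * (3 * sqrt 2 / 2) * x ^ 3 * y - 4 / 3 * x ^ 4)) /\
  (forall sg : R, sg = 1 \/ sg = -1 ->
    isochronous_zero_urabe
      (fun x y => - y - sg * (2 * sqrt 2) * x * y + x ^ 2 + sg * (2 * sqrt 2) * x ^ 3)
      (fun x y => x - sg * (6 * sqrt 2) * y ^ 2 - 2 * x * y
                  + sg * (2 * sqrt 2) * x ^ 2 + sg * (8 * sqrt 2) * x ^ 2 * y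
                  + 14 / 3 * x ^ 3 - sg * (2 * sqrt 2) * x ^ 4)).
Proof.
  split; [exact system_i_isochronous|].
  split; [exact system_ii_isochronous | exact system_iii_isochronous].
Qed.
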